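(* Let $m\ge n$, $B\in\mathbb R^{n\times m}$ of full row rank, $f:\mathbb R^m\to\mathbb R$, $h:\mathbb R^n\to\mathbb R$ convex and continuously differentiable with Lipschitz gradients, $\mathcal L(u,p)=f(u)-h(p)+(Bu,p)$, and let $(u^*,p^* )$ be the saddle point of $\mathcal L$. Let $\mathcal I_{\mathcal V}$ ($m\times m$) and $\mathcal I_{\mathcal Q}$ ($n\times n$) be symmetric positive definite. Assume $f\in\mathcal S^{1,1}_{\mu_{f,\mathcal I_{\mathcal V}},L_{f,\mathcal I_{\mathcal V}}}$ with respect to $\mathcal I_{\mathcal V}$ with $0<\mu_{f,\mathcal I_{\mathcal V}}\le L_{f,\mathcal I_{\mathcal V}}<2$. Define the Lyapunov function $\mathcal E(u,p)=\frac12\|u-u^*\|^2_{\mathcal I_{\mathcal V}}+\frac12\|p-p^*\|^2_{\mathcal I_{\mathcal Q}}$ and the transformed primal-dual (TPD) vector field $\mathcal G=(\mathcal G^u,\mathcal G^p)$, $$\mathcal G^u(u,p)=-\mathcal I_{\mathcal V}^{-1}(\nabla f(u)+B^\top p),\qquad \mathcal G^p(u,p)=-\mathcal I_{\mathcal Q}^{-1}\big(\nabla h_B(p)-Be(u)\big).$$ Then for all $(u,p)$, $$-\nabla\mathcal E(u,p)\cdot\mathcal G(u,p)\ \ge\ \mu\,\mathcal E(u,p)+\frac{\mu_{f,\mathcal I_{\mathcal V}}}{2}\|v-v^*\|^2_{\mathcal I_{\mathcal V}},$$ where $\mu=\min\{\mu_{\mathcal V},\mu_{\mathcal Q}\}>0$,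 $v=u+\mathcal I_{\mathcal V}^{-1}B^\top p$, $v^*=u^*+\mathcal I_{\mathcal V}^{-1}B^\top p^*$. Consequently, if $(u(t),p(t))$ solves $u'=\mathcal G^u(u,p)$, $p'=\mathcal G^p(u,p)$, then $\mathcal E(u(t),p(t))\le e^{-\mu t}\mathcal E(u(0),p(0))$ for all $t>0$.
   Context: $(\cdot,\cdot)$ is the Euclidean inner product; for SPD $M$, $\|x\|_M=(Mx,x)^{1/2}$. A saddle point satisfies $\nabla f(u^* )+B^\top p^*=0$, $Bu^*=\nabla h(p^* )$. Bregman divergence: $D_g(y,x)=g(y)-g(x)-(\nabla g(x),y-x)$; $g\in\mathcal S^{1,1}_{\mu_{g,M},L_{g,M}}$ with respect to SPD $M$ means $\frac{\mu_{g,M}}{2}\|x-y\|_M^2\le D_g(y,x)\le\frac{L_{g,M}}{2}\|x-y\|_M^2$ for all $x,y$. Here $e(u)=u-\mathcal I_{\mathcal V}^{-1}\nabla f(u)$ and $h_B(p)=h(p)+\frac12(B\mathcal I_{\mathcal V}^{-1}B^\top p,p)$; $\mu_{h_B,\mathcal I_{\mathcal Q}}>0$ denotes the strong convexity constant of $h_B$ with respect to $\mathcal I_{\mathcal Q}$. Constants: $\mu_{\mathcal V}=\mu_{f,\mathcal I_{\mathcal V}}$ and $\mu_{\mathcal Q}=(2-L_{f,\mathcal I_{\mathcal V}})\mu_{h_B,\mathcal I_{\mathcal Q}}$. The expression $\nabla\mathcal E(u,p)\cdot\mathcal G(u,p)$ means $(\mathcal I_{\mathcal V}(u-u^* ),\mathcal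 G^u(u,p))+(\mathcal I_{\mathcal Q}(p-p^* ),\mathcal G^p(u,p))$. *)

From mathcomp Require Import all_boot all_order all_algebra.
From mathcomp Require Import all_classical all_reals all_analysis.
Set Implicit Arguments. Unset Strict Implicit. Unset Printing Implicit Defensive.
Import Order.TTheory GRing.Theory Num.Theory.
Local Open Scope ring_scope.
Local Open Scope classical_set_scope.

Section Defs.
Variable R : realType.

Definition ip (k : nat) (x y : 'cV[R]_k) : R := (x^T *m y) 0 0.

Definition sqnormM (k : nat) (M : 'M[R]_k) (x : 'cV[R]_k) : R := ip (M *m x) x.

Definition spd (k : nat) (M : 'M[R]_k) : Prop :=
  M^T = M /\ forall x : 'cV[R]_k, x != 0 -> 0 < sqnormM M x.

Definition is_gradient (k : nat) (f : 'cV[R]_k -> R) (gf : 'cV[R]_k -> 'cV[R]_k) : Prop :=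
  forall x, differentiable f x /\ forall v, 'd f x v = ip (gf x) v.

Definition convex_fn (k : nat) (f : 'cV[R]_k -> R) : Prop :=
  forall (x y : 'cV[R]_k) (t : R), 0 <= t <= 1 ->
    f (t *: x + (1 - t) *: y) <= t * f x + (1 - t) * f y.

Definition lipschitz_fn (k : nat) (g : 'cV[R]_k -> 'cV[R]_k) : Prop :=
  exists L : R, forall x y, `|g x - g y| <= L * `|x - y|.

Definition bregman (k : nat) (g : 'cV[R]_k -> R) (gg : 'cV[R]_k -> 'cV[R]_k)
  (y x : 'cV[R]_k) : R := g y - g x - ip (gg x) (y - x).

Definition S11 (k : nat) (g : 'cV[R]_k -> R) (gg : 'cV[R]_k -> 'cV[R]_k)
  (M : 'M[R]_k) (mu L : R) : Prop :=
  forall x y : 'cV[R]_k,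
    mu / 2 * sqnormM M (x - y) <= bregman g gg y x <= L / 2 * sqnormM M (x - y).

Definition hB (m n : nat) (h : 'cV[R]_n -> R) (B : 'M[R]_(n, m)) (IV : 'M[R]_m)
  (p : 'cV[R]_n) : R := h p + 1 / 2 * ip (B *m invmx IV *m B^T *m p) p.
Definition ghB (m n : nat) (gh : 'cV[R]_n -> 'cV[R]_n) (B : 'M[R]_(n, m)) (IV : 'M[R]_m)
  (p : 'cV[R]_n) : 'cV[R]_n := gh p + B *m invmx IV *m B^T *m p.

Definition e_map (m : nat) (gf : 'cV[R]_m -> 'cV[R]_m) (IV : 'M[R]_m) (u : 'cV[R]_m)
  : 'cV[R]_m := u - invmx IV *m gf u.

Definition Gu (m n : nat) (gf : 'cV[R]_m -> 'cV[R]_m) (B : 'M[R]_(n, m)) (IV : 'M[R]_m)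
  (u : 'cV[R]_m) (p : 'cV[R]_n) : 'cV[R]_m := - (invmx IV *m (gf u + B^T *m p)).
Definition Gp (m n : nat) (gf : 'cV[R]_m -> 'cV[R]_m) (gh : 'cV[R]_n -> 'cV[R]_n)
  (B : 'M[R]_(n, m)) (IV : 'M[R]_m) (IQ : 'M[R]_n)
  (u : 'cV[R]_m) (p : 'cV[R]_n) : 'cV[R]_n :=
  - (invmx IQ *m (ghB gh B IV p - B *m e_map gf IV u)).

Definition Lyap (m n : nat) (IV : 'M[R]_m) (IQ : 'M[R]_n) (us : 'cV[R]_m) (ps : 'cV[R]_n)
  (u : 'cV[R]_m) (p : 'cV[R]_n) : R :=
  1 / 2 * sqnormM IV (u - us) + 1 / 2 * sqnormM IQ (p - ps).

Definition dLyapG (m n : nat) (gf : 'cV[R]_m -> 'cV[R]_m) (gh : 'cV[R]_n -> 'cV[R]_n)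
  (B : 'M[R]_(n, m)) (IV : 'M[R]_m) (IQ : 'M[R]_n) (us : 'cV[R]_m) (ps : 'cV[R]_n)
  (u : 'cV[R]_m) (p : 'cV[R]_n) : R :=
  ip (IV *m (u - us)) (Gu gf B IV u p) + ip (IQ *m (p - ps)) (Gp gf gh B IV IQ u p).

End Defs.

(* the normed-module view of column vectors provided by MathComp-Analysis *)
Notation nvec R k := (matrix_matrix__canonical__normed_module_NormedModule R k 1).

Definition continuous_fn (R : realType) (k : nat) (g : 'cV[R]_k -> 'cV[R]_k) : Prop :=
  continuous (g : nvec R k -> nvec R k).

Definition cont_nonneg (R : realType) (k : nat) (u : R -> 'cV[R]_k) : Prop :=
  {within `[0, +oo[, continuous (u : R -> nvec R k)}.

(* Write a := u - us, d := p - ps and w := IV^-1 B^T d, so that v - vs = a + w.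
   The saddle-point equations turn -grad E . G into
     (gf u - gf us, a + w) + (gh p - gh ps, d) + |w|^2_IV.
   Comparing four Bregman divergences of f, at us - w/2 and u + w/2, bounds the first
   term below by muf |a + w/2|^2 - Lf/4 |w|^2, and the strong convexity of h_B bounds
   muhB |d|^2_IQ by the last two terms; the parallelogram identity for |a + w/2|^2
   then yields the strong Lyapunov inequality.  Exponential decay along the flow
   follows because t |-> exp(mu t) E(u t, p t) has a nonpositive derivative. *)

From mathcomp Require Import all_boot all_order all_algebra.
From mathcomp Require Import all_classical all_reals all_analysis.
From mathcomp Require Import ring lra.
Import Order.TTheory GRing.Theory Num.Theory.
Import numFieldNormedType.Exports.
Local Open Scope ring_scope.
Local Open Scope classical_set_scope.
Set Implicit Arguments. Unset Strict Implicit. Unset Printing Implicit Defensive.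

Section InnerProduct.
Variables (R : realType) (k : nat).
Implicit Types (x y z : 'cV[R]_k) (M : 'M[R]_k).

Lemma ipE x y : ip x y = \sum_i x i 0 * y i 0.
Proof. by rewrite /ip !mxE; apply: eq_bigr => i _; rewrite mxE. Qed.

Lemma ipC x y : ip x y = ip y x.
Proof. by rewrite !ipE; apply: eq_bigr => i _; rewrite mulrC. Qed.

Lemma ipDr x y z : ip x (y + z) = ip x y + ip x z.
Proof. by rewrite /ip mulmxDr mxE. Qed.

Lemma ipDl x y z : ip (x + y) z = ip x z + ip y z.
Proof. by rewrite ipC ipDr !(ipC z). Qed.

Lemma ipZr c x y : ip x (c *: y) = c * ip x y.
Proof. by rewrite /ip -scalemxAr mxE. Qed.

Lemma ipZl c x y : ip (c *: x) y = c * ip x y.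
Proof. by rewrite ipC ipZr ipC. Qed.

Lemma ipNr x y : ip x (- y) = - ip x y.
Proof. by rewrite -scaleN1r ipZr mulN1r. Qed.

Lemma ipNl x y : ip (- x) y = - ip x y.
Proof. by rewrite ipC ipNr ipC. Qed.

Lemma ipBr x y z : ip x (y - z) = ip x y - ip x z.
Proof. by rewrite ipDr ipNr. Qed.

Lemma ipBl x y z : ip (x - y) z = ip x z - ip y z.
Proof. by rewrite ipDl ipNl. Qed.

Lemma ip0l x : ip 0 x = 0.
Proof. by rewrite -(scale0r 0) ipZl mul0r. Qed.

Lemma ip_trmx l (A : 'M[R]_(l, k)) x (y : 'cV[R]_l) : ip (A *m x) y = ip x (A^T *m y).
Proof. by rewrite /ip trmx_mul mulmxA. Qed.

Lemma spd_sym M x y : spd M -> ip (M *m x) y = ip (M *m y) x.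
Proof. by case=> sM _; rewrite ip_trmx sM ipC. Qed.

Lemma sqnormM_ge0 M x : spd M -> 0 <= sqnormM M x.
Proof.
case=> _ pM; have [->|/pM/ltW//] := eqVneq x 0.
by rewrite /sqnormM mulmx0 ip0l.
Qed.

Lemma spd_unitmx M : spd M -> M \in unitmx.
Proof.
case=> sM pM; rewrite unitmxE unitfE; apply/negP => /det0P[v v0 vM].
have : 0 < sqnormM M v^T by apply: pM; rewrite trmx_eq0.
by rewrite /sqnormM -sM -trmx_mul vM trmx0 ip0l ltxx.
Qed.

Lemma ip_invmx M x y : spd M -> ip (M *m x) (invmx M *m y) = ip x y.
Proof.
move=> sM; rewrite ip_trmx; case: (sM) => -> _.
by rewrite mulmxA mulmxV ?mul1mx // spd_unitmx.
Qed.

Lemma sqnormMN M x : sqnormM M (- x) = sqnormM M x.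
Proof. by rewrite /sqnormM mulmxN ipNl ipNr opprK. Qed.

Lemma sqnormMD M x y : spd M ->
  sqnormM M (x + y) = sqnormM M x + 2 * ip (M *m x) y + sqnormM M y.
Proof.
move=> sM; rewrite /sqnormM mulmxDr !ipDl !ipDr (spd_sym y x sM); ring.
Qed.

Lemma sqnormMZ M c x : sqnormM M (c *: x) = c ^+ 2 * sqnormM M x.
Proof. by rewrite /sqnormM -scalemxAr ipZl ipZr mulrA expr2. Qed.

Lemma sqnormM_midpoint M x y : spd M ->
  sqnormM M (x + 2^-1 *: y) =
  2^-1 * sqnormM M x + 2^-1 * sqnormM M (x + y) - 4^-1 * sqnormM M y.
Proof. by move=> sM; rewrite !sqnormMD // sqnormMZ ipZr; field. Qed.

End InnerProduct.

Section Bregman.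
Variables (R : realType) (k : nat).
Variables (g : 'cV[R]_k -> R) (gg : 'cV[R]_k -> 'cV[R]_k).

Lemma bregman_symsum x y : bregman g gg y x + bregman g gg x y = ip (gg x - gg y) (x - y).
Proof. by rewrite /bregman !(ipBr, ipBl); ring. Qed.

Lemma bregman_four_point x y q1 q2 :
  bregman g gg q1 x - bregman g gg q1 y + bregman g gg q2 y - bregman g gg q2 x =
  ip (gg x - gg y) (q2 - q1).
Proof. by rewrite /bregman !(ipBr, ipBl); ring. Qed.

Lemma convex_bregman_ge0 x y : convex_fn g -> is_gradient g gg -> 0 <= bregman g gg y x.
Proof.
move=> cvx grad; have [dg dgE] := grad x.
have dxy : derivable g x (y - x) by apply: diff_derivable.
rewrite /bregman subr_ge0 -dgE -deriveE //.
apply: (cvgr_to_le (cvg_dnbhs_at_right dxy)); near=> t.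
have t0 : 0 < t by near: t; exact: nbhs_right_gt.
have t1 : t < 1 by near: t; exact: nbhs_right_lt.
rewrite /= /shift.
have -> : t *: (y - x) + x = t *: y + (1 - t) *: x.
  by rewrite scalerBr scalerBl scale1r addrA addrAC.
have := cvx y x t; rewrite (ltW t0) (ltW t1) => /(_ isT) cvxt.
change (t^-1 * (g (t *: y + (1 - t) *: x) - g x) <= g y - g x).
rewrite mulrC ler_pdivrMr //; lra.
Unshelve. all: by end_near.
Qed.

Lemma convex_gradient_monotone x y : convex_fn g -> is_gradient g gg ->
  0 <= ip (gg x - gg y) (x - y).
Proof. by move=> cvx grad; rewrite -bregman_symsum addr_ge0 // convex_bregman_ge0. Qed.

Lemma strongly_convex_gradient_monotone (M : 'M[R]_k) mu x y :
  (forall x y, mu / 2 * sqnormM M (x - y) <= bregman g gg y x) ->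
  mu * sqnormM M (x - y) <= ip (gg x - gg y) (x - y).
Proof.
move=> lb; rewrite -bregman_symsum.
have := lb x y; have := lb y x; rewrite -opprB sqnormMN; lra.
Qed.

Lemma S11_shifted_monotone (M : 'M[R]_k) mu L x y w : spd M -> S11 g gg M mu L ->
  mu * sqnormM M (x - y + 2^-1 *: w) - L / 4 * sqnormM M w <=
  ip (gg x - gg y) (x - y + w).
Proof.
move=> sM hS; set q1 := y - 2^-1 *: w; set q2 := x + 2^-1 *: w.
have -> : x - y + w = q2 - q1.
  by apply/matrixP => i j; rewrite !mxE; field.
rewrite -bregman_four_point.
have /andP[lb1 _] := hS x q1; have /andP[_ ub1] := hS y q1.
have /andP[lb2 _] := hS y q2; have /andP[_ ub2] := hS x q2.
have e1 : x - q1 = x - y + 2^-1 *: w by rewrite /q1 opprB addrA addrAC.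
have e2 : y - q2 = - (x - y + 2^-1 *: w) by rewrite /q2 opprD addrA opprD opprB.
have e3 : y - q1 = 2^-1 *: w by rewrite /q1 opprB addrC subrK.
have e4 : x - q2 = - (2^-1 *: w) by rewrite /q2 opprD addrA subrr add0r.
move: lb1 ub1 lb2 ub2; rewrite e1 e2 e3 e4 !sqnormMN sqnormMZ; lra.
Qed.

End Bregman.

Section TPDLyapunov.
Variables (R : realType) (m n : nat).
Variables (B : 'M[R]_(n, m)) (gf : 'cV[R]_m -> 'cV[R]_m) (gh : 'cV[R]_n -> 'cV[R]_n).
Variables (IV : 'M[R]_m) (IQ : 'M[R]_n) (us : 'cV[R]_m) (ps : 'cV[R]_n).
Hypotheses (spdV : spd IV) (spdQ : spd IQ).

Let IVinvBt (d : 'cV[R]_n) := invmx IV *m B^T *m d.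

Lemma mul_IVinvBt d : IV *m IVinvBt d = B^T *m d.
Proof. by rewrite /IVinvBt -mulmxA mulKVmx // spd_unitmx. Qed.

Lemma ip_mul_IVinvBt d x : ip d (B *m x) = ip (IV *m IVinvBt d) x.
Proof. by rewrite mul_IVinvBt ip_trmx trmxK. Qed.

Lemma ghB_monotone_gap p q :
  ip (ghB gh B IV p - ghB gh B IV q) (p - q) =
  ip (gh p - gh q) (p - q) + sqnormM IV (IVinvBt (p - q)).
Proof.
have -> : ghB gh B IV p - ghB gh B IV q = gh p - gh q + B *m IVinvBt (p - q).
  by rewrite /ghB /IVinvBt opprD addrACA -mulmxBr !mulmxA.
by rewrite ipDl [ip (B *m _) _]ipC ip_mul_IVinvBt.
Qed.

Hypotheses (saddle_u : gf us + B^T *m ps = 0) (saddle_p : B *m us = gh ps).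

Lemma dLyapG_TPD u p :
  - dLyapG gf gh B IV IQ us ps u p =
  ip (gf u - gf us) (u - us + IVinvBt (p - ps)) + ip (gh p - gh ps) (p - ps)
  + sqnormM IV (IVinvBt (p - ps)).
Proof.
set a := u - us; set d := p - ps; set dg := gf u - gf us; set dh := gh p - gh ps.
have gf_us : gf us = - (B^T *m ps) by apply/eqP; rewrite -addr_eq0 saddle_u.
have Gu_gap : gf u + B^T *m p = dg + IV *m IVinvBt d.
  by rewrite mul_IVinvBt /dg /d mulmxBr gf_us opprK addrACA subrr addr0.
have Gp_gap : ghB gh B IV p - B *m e_map gf IV u =
    dh - B *m a + B *m (IVinvBt d + invmx IV *m dg).
  rewrite /ghB /e_map /IVinvBt /a /d /dg /dh -saddle_p gf_us.
  rewrite !(mulmxDr, mulmxBr, mulmxN) !mulmxA.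
  by apply/matrixP => i j; rewrite !mxE; ring.
rewrite /dLyapG /Gu /Gp !ipNr !ip_invmx // opprD !opprK Gu_gap Gp_gap -/a -/d.
clearbody a d dg dh.
rewrite !ipDr ipNr !ip_mul_IVinvBt !ipDr ip_invmx // /sqnormM.
by rewrite (ipC a) (ipC (IV *m IVinvBt d) a) (ipC d) (ipC (IVinvBt d)); ring.
Qed.

Variables (f : 'cV[R]_m -> R) (h : 'cV[R]_n -> R) (muf Lf muhB : R).
Hypotheses (grad_h : is_gradient h gh) (convex_h : convex_fn h).
Hypotheses (S11_f : S11 f gf IV muf Lf) (muf_gt0 : 0 < muf) (muf_le_Lf : muf <= Lf).
Hypothesis (Lf_lt2 : Lf < 2).
Hypothesis hB_strongly_convex : forall x y : 'cV[R]_n,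
  muhB / 2 * sqnormM IQ (x - y) <= bregman (hB h B IV) (ghB gh B IV) y x.

Lemma TPD_strong_Lyapunov u p :
  Num.min muf ((2 - Lf) * muhB) * Lyap IV IQ us ps u p
  + muf / 2 * sqnormM IV (u + invmx IV *m B^T *m p - (us + invmx IV *m B^T *m ps))
  <= - dLyapG gf gh B IV IQ us ps u p.
Proof.
set mu := Num.min _ _; set a := u - us; set d := p - ps.
have -> : u + invmx IV *m B^T *m p - (us + invmx IV *m B^T *m ps) = a + IVinvBt d.
  by rewrite opprD addrACA -mulmxBr.
rewrite dLyapG_TPD /Lyap -/a -/d.
have S11_gap := S11_shifted_monotone u us (IVinvBt d) spdV S11_f.
rewrite -/a sqnormM_midpoint // in S11_gap.
have hB_gap := strongly_convex_gradient_monotone p ps hB_strongly_convex.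
rewrite ghB_monotone_gap -/d in hB_gap.
have h_mono : 0 <= ip (gh p - gh ps) d := convex_gradient_monotone p ps convex_h grad_h.
have mu_a : mu * sqnormM IV a <= muf * sqnormM IV a.
  by rewrite ler_wpM2r ?sqnormM_ge0 // ge_min lexx.
have mu_d : mu * sqnormM IQ d <=
    (2 - Lf) * (ip (gh p - gh ps) d + sqnormM IV (IVinvBt d)).
  have mu_le : mu <= (2 - Lf) * muhB by rewrite ge_min lexx orbT.
  rewrite (le_trans (ler_wpM2r (sqnormM_ge0 d spdQ) mu_le)) //.
  by rewrite -mulrA ler_wpM2l // subr_ge0 ltW.
have Lf_h : 0 <= Lf * ip (gh p - gh ps) d.
  by rewrite mulr_ge0 // (le_trans (ltW muf_gt0)).
have Lf_w : 0 <= (Lf - muf) * sqnormM IV (IVinvBt d).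
  by rewrite mulr_ge0 ?sqnormM_ge0 // subr_ge0.
(* the weight of |w|^2 left after the S11 bound is 1 - (muf + Lf)/4 >= 1 - Lf/2 *)
lra.
Qed.

End TPDLyapunov.

Section MatrixCurves.
Variable R : realType.
Implicit Types t : R.

Lemma is_derive_mx k l (y : R -> 'M[R]_(k, l)) t (dy : 'M[R]_(k, l)) :
  (forall i j, is_derive t 1 (fun s => y s i j) (dy i j)) -> is_derive t 1 y dy.
Proof.
move=> dyij; have yt : derivable y t 1 by apply/derivable_mxP => i j; case: (dyij i j).
apply: DeriveDef => //; rewrite derive_mx //.
by apply/matrixP => i j; rewrite mxE derive_val.
Qed.

Lemma is_derive_mx_entry k l (y : R -> 'M[R]_(k, l)) t (dy : 'M[R]_(k, l)) i j :
  is_derive t 1 y dy -> is_derive t 1 (fun s => y s i j) (dy i j).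
Proof.
move=> [yt <-]; have yij : derivable (fun s => y s i j) t 1 by move/derivable_mxP: yt.
by apply: DeriveDef => //; rewrite derive_mx // mxE.
Qed.

Lemma is_derive_mulmx k l (A : 'M[R]_(k, l)) (y : R -> 'cV[R]_l) t dy :
  is_derive t 1 y dy -> is_derive t 1 (fun s => A *m y s) (A *m dy).
Proof.
move=> yt; apply: is_derive_mx => i j.
have := is_derive_sum (fun r => is_deriveZ (A i r) (is_derive_mx_entry r j yt)).
rewrite fct_sumE mxE; congr is_derive; apply/funext => s; rewrite mxE.
by apply: eq_bigr.
Qed.

Lemma is_derive_ip k (y z : R -> 'cV[R]_k) t dy dz :
  is_derive t 1 y dy -> is_derive t 1 z dz ->
  is_derive t 1 (fun s => ip (y s) (z s)) (ip dy (z t) + ip (y t) dz).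
Proof.
move=> yt zt.
have -> : (fun s => ip (y s) (z s)) = \sum_i ((fun s => y s i 0) * (fun s => z s i 0)).
  by apply/funext => s; rewrite ipE fct_sumE.
apply: is_derive_eq.
  exact: is_derive_sum (fun i => is_deriveM (is_derive_mx_entry i 0 yt) (is_derive_mx_entry i 0 zt)).
rewrite !ipE -big_split /=.
by apply: eq_bigr => i _; rewrite addrC [z t i 0 *: _]mulrC.
Qed.

End MatrixCurves.

Section Decay.
Variable R : realType.

Lemma is_derive_half_sqnormM k (M : 'M[R]_k) (y : R -> 'cV[R]_k) (c : 'cV[R]_k) (t : R) dy :
  spd M -> is_derive t 1 y dy ->
  is_derive t 1 (fun s => 1 / 2 * sqnormM M (y s - c)) (ip (M *m (y t - c)) dy).
Proof.
move=> sM yt; have yct : is_derive t 1 (fun s => y s - c) dy.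
  by apply: is_derive_eq (is_deriveB yt (is_derive_cst c t 1)) _; rewrite subr0.
apply: is_derive_eq (is_deriveZ (1 / 2) (is_derive_ip (is_derive_mulmx M yct) yct)) _.
by rewrite (spd_sym _ _ sM) /GRing.scale /=; field.
Qed.

Lemma is_derive_expRM (mu x : R) : is_derive x 1 (fun s => expR (mu * s)) (expR (mu * x) * mu).
Proof.
apply: is_derive_eq (is_derive1_comp (is_derive_expR _) (is_deriveZ mu (is_derive_id x 1))) _.
by rewrite /GRing.scale /= mulr1.
Qed.

Lemma le_expR_decay (E dE : R -> R) (mu : R) :
  {within `[0, +oo[, continuous E} ->
  (forall t : R, 0 < t -> is_derive t 1 E (dE t)) ->
  (forall t : R, 0 < t -> dE t <= - (mu * E t)) ->
  forall t : R, 0 <= t -> E t <= expR (- (mu * t)) * E 0.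
Proof.
move=> cE dEt dE_le t t0.
pose F s := expR (mu * s) * E s.
have dF (x : R) : 0 < x -> is_derive x 1 F (expR (mu * x) * dE x + E x * (expR (mu * x) * mu)).
  by move=> x0; exact: is_deriveM (is_derive_expRM mu x) (dEt x x0).
have F_nonincr : F t <= F 0.
  apply: (ler0_derive1_nincry (a := 0)) => //.
  - by move=> x; rewrite in_itv /= andbT => /dF[].
  - move=> x; rewrite in_itv /= andbT => x0; rewrite derive1E (@derive_val _ _ _ _ _ _ _ (dF x x0)).
    rewrite mulrCA -mulrDr mulr_ge0_le0 ?expR_ge0 //.
    by have := dE_le x x0; lra.
  - have cexp : continuous (fun s : R => expR (mu * s)).
      move=> x; apply/differentiable_continuous/derivable1_diffP.
      by case: (is_derive_expRM mu x).
    by move=> x; apply: cvgM; [exact: continuous_subspaceT cexp x | exact: cE].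
have -> : E t = expR (- (mu * t)) * F t by rewrite /F mulrA -expRD addNr expR0 mul1r.
by rewrite ler_wpM2l ?expR_ge0 // (le_trans F_nonincr) // /F mulr0 expR0 mul1r.
Qed.

End Decay.

Section Trajectory.
Variable R : realType.

Lemma sqnormM_continuous k (M : 'M[R]_k) (c : 'cV[R]_k) :
  continuous (fun x : nvec R k => sqnormM M (x - c)).
Proof.
have entry i : continuous (fun x : nvec R k => x i 0 - c i 0).
  by move=> x; apply: continuousB; [exact: coord_continuous | exact: cst_continuous].
have -> : (fun x : nvec R k => sqnormM M (x - c)) =
    fun x => \sum_i (\sum_j M i j * (x j 0 - c j 0)) * (x i 0 - c i 0).
  apply/funext => x; rewrite /sqnormM ipE; apply: eq_bigr => i _; rewrite !mxE.
  by congr (_ * _); apply: eq_bigr => j _; rewrite !mxE.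
have inner i : continuous (fun x : nvec R k => \sum_j M i j * (x j 0 - c j 0)).
  apply: continuous_big => [|j _ x]; first exact: add_continuous.
  exact: (@continuousM _ _ (cst (M i j)) _ x (@cst_continuous _ _ (M i j) x) (entry j x)).
apply: continuous_big => [|i _ x]; first exact: add_continuous.
exact: (@continuousM _ _ _ _ x (inner i x) (entry i x)).
Qed.

Variables (m n : nat) (IV : 'M[R]_m) (IQ : 'M[R]_n) (us : 'cV[R]_m) (ps : 'cV[R]_n).

Lemma Lyap_continuous_along (u : R -> 'cV[R]_m) (p : R -> 'cV[R]_n) :
  cont_nonneg u -> cont_nonneg p ->
  {within `[0, +oo[, continuous (fun s => Lyap IV IQ us ps (u s) (p s))}.
Proof.
move=> cu cp.
have cV : {within `[0, +oo[, continuous (fun s => sqnormM IV (u s - us))}.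
  by move=> x; exact: continuous_comp (cu x) (@sqnormM_continuous m IV us (u x)).
have cQ : {within `[0, +oo[, continuous (fun s => sqnormM IQ (p s - ps))}.
  by move=> x; exact: continuous_comp (cp x) (@sqnormM_continuous n IQ ps (p x)).
move=> x; apply: cvgD; apply: cvgM; try exact: cvg_cst.
  exact: cV.
exact: cQ.
Qed.

Lemma is_derive_Lyap_along (u : R -> 'cV[R]_m) (p : R -> 'cV[R]_n) (t : R) du dp :
  spd IV -> spd IQ -> is_derive t 1 u du -> is_derive t 1 p dp ->
  is_derive t 1 (fun s => Lyap IV IQ us ps (u s) (p s))
    (ip (IV *m (u t - us)) du + ip (IQ *m (p t - ps)) dp).
Proof.
by move=> sV sQ ut pt; apply: is_deriveD; apply: is_derive_half_sqnormM.
Qed.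

End Trajectory.

Theorem theorem3p2 (R : realType) (m n : nat)
  (B : 'M[R]_(n, m)) (f : 'cV[R]_m -> R) (gf : 'cV[R]_m -> 'cV[R]_m)
  (h : 'cV[R]_n -> R) (gh : 'cV[R]_n -> 'cV[R]_n)
  (IV : 'M[R]_m) (IQ : 'M[R]_n) (us : 'cV[R]_m) (ps : 'cV[R]_n)
  (muf Lf muhB : R) :
  (n <= m)%N -> \rank B = n ->
  is_gradient f gf -> is_gradient h gh ->
  convex_fn f -> convex_fn h ->
  continuous_fn gf -> continuous_fn gh ->
  lipschitz_fn gf -> lipschitz_fn gh ->
  (* (us, ps) is the saddle point of L(u,p) = f u - h p + (B u, p) *)
  gf us + B^T *m ps = 0 -> B *m us = gh ps ->
  spd IV -> spd IQ ->
  S11 f gf IV muf Lf -> 0 < muf -> muf <= Lf -> Lf < 2 ->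
  (* muhB is the strong convexity constant of h_B with respect to IQ *)
  0 < muhB ->
  (forall x y : 'cV[R]_n,
      muhB / 2 * sqnormM IQ (x - y) <= bregman (hB h B IV) (ghB gh B IV) y x) ->
  let mu := Num.min muf ((2 - Lf) * muhB) in
  0 < mu /\
  (forall (u : 'cV[R]_m) (p : 'cV[R]_n),
     let v := u + invmx IV *m B^T *m p in
     let vs := us + invmx IV *m B^T *m ps in
     mu * Lyap IV IQ us ps u p + muf / 2 * sqnormM IV (v - vs)
       <= - dLyapG gf gh B IV IQ us ps u p) /\
  (forall (u : R -> 'cV[R]_m) (p : R -> 'cV[R]_n),
     cont_nonneg u -> cont_nonneg p ->
     (forall t : R, 0 < t ->
        derivable u t 1 /\ derivable p t 1 /\
        u^`() t = Gu gf B IV (u t) (p t) /\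
        p^`() t = Gp gf gh B IV IQ (u t) (p t)) ->
     forall t : R, 0 < t ->
       Lyap IV IQ us ps (u t) (p t) <= expR (- (mu * t)) * Lyap IV IQ us ps (u 0) (p 0)).
Proof.
move=> _ _ _ grad_h _ convex_h _ _ _ _ saddle_u saddle_p spdV spdQ S11_f muf_gt0 muf_le_Lf
  Lf_lt2 muhB_gt0 hB_strongly_convex mu.
have mu_gt0 : 0 < mu by rewrite lt_min muf_gt0 mulr_gt0 // subr_gt0.
have strong u p := TPD_strong_Lyapunov spdV spdQ saddle_u saddle_p grad_h convex_h
  S11_f muf_gt0 muf_le_Lf Lf_lt2 hB_strongly_convex u p.
split=> //; split=> // u p cu cp flow t t0.
apply: (le_expR_decay (E := fun s => Lyap IV IQ us ps (u s) (p s))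
  (dE := fun s => dLyapG gf gh B IV IQ us ps (u s) (p s))) (ltW t0).
- exact: Lyap_continuous_along.
- move=> s /flow[/derivableP du [/derivableP dp [u'E p'E]]].
  by rewrite -!derive1E u'E p'E in du dp; exact: is_derive_Lyap_along.
- move=> s _; have := strong (u s) (p s); rewrite -/mu.
  have := sqnormM_ge0 (u s + invmx IV *m B^T *m p s - (us + invmx IV *m B^T *m ps)) spdV.
  move: (sqnormM IV _) => Nv Nv_ge0; have := mulr_ge0 (ltW muf_gt0) Nv_ge0; lra.
Qed.
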